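(* Let $f(x)=\frac1n\sum_{i=1}^n f_i(x)$ where each $f_i:\mathbb{R}^d\to\mathbb{R}$ is differentiable and $\mu_i$-strongly convex with $\mu_i>0$, and let $x_\star$ be the minimizer of $f$. Let $\mathcal{S}$ be a probability distribution over subsets of $[n]$, let $S\sim\mathcal{S}$, $p_i:=\Pr(i\in S)$ and $p_C:=\Pr(S=C)$, and assume $S$ is proper ($p_i>0$ for all $i$) and nonvacuous ($\Pr(S=\varnothing)=0$). For $C\subseteq[n]$ let $f_C(x):=\sum_{i\in C}\frac{1}{np_i}f_i(x)$, and define $$\mu_{\rm AS}:=\min_{C\subseteq[n],\,p_C>0}\sum_{i\in C}\frac{\mu_i}{np_i},\qquad \sigma_{\star,\rm AS}^2:=\sum_{C\subseteq[n],\,p_C>0}p_C\Big\|\sum_{i\in C}\frac{1}{np_i}\nabla f_i(x_\star)\Big\|^2.$$ Consider SPPM-AS: from arbitrary $x_0\in\mathbb{R}^d$, at each step sample $S_k\sim\mathcal{S}$ independently of the past and set $x_{k+1}=\operatorname{prox}_{\gamma f_{S_k}}(x_k)$. Then for any $\gamma>0$ and $k\ge0$, $$\mathbb{E}\|x_k-x_\star\|^2\le\left(\frac{1}{1+\gamma\mu_{\rm AS}}\right)^{2k}\|x_0-x_\star\|^2+\frac{\gamma\sigma_{\star,\rm AS}^2}{\gamma\mu_{\rm AS}^2+2\mu_{\rm AS}}.$$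
   Context: $\operatorname{prox}_{\gamma\phi}(y):=\arg\min_{x\in\mathbb{R}^d}\{\phi(x)+\frac{1}{2\gamma}\|x-y\|^2\}$. $\mu$-strong convexity of $g$: $g(y)+\langle\nabla g(y),x-y\rangle+\frac{\mu}{2}\|x-y\|^2\le g(x)$ for all $x,y$. *)

From HB Require Import structures.
From mathcomp Require Import all_boot all_order all_algebra.
From mathcomp Require Import all_classical all_reals all_analysis.
Set Implicit Arguments. Unset Strict Implicit. Unset Printing Implicit Defensive.
Import Order.TTheory GRing.Theory Num.Theory.
Import numFieldNormedType.Exports.
Local Open Scope ring_scope.

Section Defs.
Variables (R : realType) (d n : nat).

Definition dotv (u v : 'rV[R]_d) : R := (u *m v^T) 0 0.
Definition sqnorm (u : 'rV[R]_d) : R := dotv u u.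

Definition has_gradient (g : 'rV[R]_d -> R) (grad : 'rV[R]_d -> 'rV[R]_d) :=
  forall x, differentiable g x /\ forall h, 'd g x h = dotv (grad x) h.

Definition strongly_convex (g : 'rV[R]_d -> R) (grad : 'rV[R]_d -> 'rV[R]_d)
  (mu : R) := forall x y,
  g y + dotv (grad y) (x - y) + mu / 2 * sqnorm (x - y) <= g x.

Definition is_prox (phi : 'rV[R]_d -> R) (gamma : R) (y xp : 'rV[R]_d) :=
  forall x, phi xp + (2 * gamma)^-1 * sqnorm (xp - y)
            <= phi x + (2 * gamma)^-1 * sqnorm (x - y).

Definition incl_prob (pS : {set 'I_n} -> R) (i : 'I_n) : R :=
  \sum_(C : {set 'I_n} | i \in C) pS C.

Definition fC (pS : {set 'I_n} -> R) (f : 'I_n -> 'rV[R]_d -> R)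
  (C : {set 'I_n}) (x : 'rV[R]_d) : R :=
  \sum_(i in C) (n%:R * incl_prob pS i)^-1 * f i x.

Definition muC (pS : {set 'I_n} -> R) (mu : 'I_n -> R) (C : {set 'I_n}) : R :=
  \sum_(i in C) mu i / (n%:R * incl_prob pS i).

(* The neutral element muC [set: 'I_n]
   is an upper bound of every muC C since all terms are positive, and at least one
   C has p_C > 0, so this big min is exactly the paper's min. *)
Definition mu_AS (pS : {set 'I_n} -> R) (mu : 'I_n -> R) : R :=
  \big[Order.min/muC pS mu [set: 'I_n]]_(C : {set 'I_n} | 0 < pS C) muC pS mu C.

Definition sigma2_AS (pS : {set 'I_n} -> R) (gf : 'I_n -> 'rV[R]_d -> 'rV[R]_d)
  (xs : 'rV[R]_d) : R :=
  \sum_(C : {set 'I_n} | 0 < pS C)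
     pS C * sqnorm (\sum_(i in C) (n%:R * incl_prob pS i)^-1 *: gf i xs).

(* SPPM-AS iterate after the sampled sets S_0, ..., S_{k-1} (listed in order),
   where prox C y = prox_{gamma f_C}(y). *)
Definition sppm_iter (prox : {set 'I_n} -> 'rV[R]_d -> 'rV[R]_d)
  (x0 : 'rV[R]_d) (s : seq {set 'I_n}) : 'rV[R]_d :=
  foldl (fun x C => prox C x) x0 s.

(* E ||x_k - x_star||^2 with S_0..S_{k-1} i.i.d. ~ pS: expectation over the
   finite product distribution on k-tuples of subsets. *)
Definition expected_sqdist (k : nat) (pS : {set 'I_n} -> R)
  (prox : {set 'I_n} -> 'rV[R]_d -> 'rV[R]_d) (x0 xs : 'rV[R]_d) : R :=
  \sum_(s : k.-tuple {set 'I_n})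
     (\prod_(C <- s) pS C) * sqnorm (sppm_iter prox x0 s - xs).

End Defs.

(* For a fixed set C, the prox optimality condition combined with strong
   convexity of f_C makes one step a contraction by 1 / (1 + gamma mu_C) towards
   xs - gamma grad f_C(xs), and mu_C >= mu_AS whenever p_C > 0.  Averaging over
   S, the cross term vanishes because the f_C are unbiased,
   sum_C p_C grad f_C(xs) = grad f(xs) = 0, and the quadratic term is
   gamma^2 sigma^2.  So one step maps E||x - xs||^2 to at most
   q (E||x - xs||^2 + gamma^2 sigma^2) with q = (1 + gamma mu_AS)^-2, a map whose
   fixed point is exactly gamma sigma^2 / (gamma mu_AS^2 + 2 mu_AS). *)

From HB Require Import structures.
From mathcomp Require Import all_boot all_order all_algebra.
From mathcomp Require Import all_classical all_reals all_analysis.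
From mathcomp Require Import ring lra.
Import Order.TTheory GRing.Theory Num.Theory.
Import numFieldNormedType.Exports.
Set Implicit Arguments. Unset Strict Implicit.
Local Open Scope ring_scope.

Section Dot.
Variables (R : realType) (d : nat).
Implicit Types u v w : 'rV[R]_d.

Lemma dotvE u v : dotv u v = \sum_j u 0 j * v 0 j.
Proof. by rewrite /dotv !mxE; apply: eq_bigr => j _; rewrite !mxE. Qed.

Lemma dotvC u v : dotv u v = dotv v u.
Proof. by rewrite !dotvE; apply: eq_bigr => j _; rewrite mulrC. Qed.

Lemma dotvDl u v w : dotv (u + v) w = dotv u w + dotv v w.
Proof. by rewrite !dotvE -big_split; apply: eq_bigr => j _; rewrite !mxE mulrDl. Qed.

Lemma dotvZl a u w : dotv (a *: u) w = a * dotv u w.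
Proof. by rewrite !dotvE mulr_sumr; apply: eq_bigr => j _; rewrite !mxE mulrA. Qed.

Lemma dotvNl u w : dotv (- u) w = - dotv u w.
Proof. by rewrite -scaleN1r dotvZl mulN1r. Qed.

Lemma dotvBl u v w : dotv (u - v) w = dotv u w - dotv v w.
Proof. by rewrite dotvDl dotvNl. Qed.

Lemma dotvDr u v w : dotv w (u + v) = dotv w u + dotv w v.
Proof. by rewrite dotvC dotvDl !(dotvC w). Qed.

Lemma dotvZr a u w : dotv w (a *: u) = a * dotv w u.
Proof. by rewrite dotvC dotvZl dotvC. Qed.

Lemma dotvNr u w : dotv w (- u) = - dotv w u.
Proof. by rewrite !(dotvC w) dotvNl. Qed.

Lemma dotvBr u v w : dotv w (u - v) = dotv w u - dotv w v.
Proof. by rewrite !(dotvC w) dotvBl. Qed.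

Lemma dotv_sumr (I : finType) (P : pred I) (F : I -> 'rV[R]_d) w :
  dotv w (\sum_(i | P i) F i) = \sum_(i | P i) dotv w (F i).
Proof.
apply: (big_morph (dotv w)); first by move=> u v; rewrite dotvDr.
by rewrite dotvE big1 // => j _; rewrite mxE mulr0.
Qed.

Lemma dotv_suml (I : finType) (P : pred I) (F : I -> 'rV[R]_d) w :
  dotv (\sum_(i | P i) F i) w = \sum_(i | P i) dotv (F i) w.
Proof. by rewrite dotvC dotv_sumr; apply: eq_bigr => i _; rewrite dotvC. Qed.

Lemma sqnorm_ge0 u : 0 <= sqnorm u.
Proof. by rewrite /sqnorm dotvE sumr_ge0 // => j _; rewrite -expr2 sqr_ge0. Qed.

Lemma sqnorm_eq0 u : sqnorm u = 0 -> u = 0.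
Proof.
rewrite /sqnorm dotvE => /psumr_eq0P u0; apply/rowP => j; rewrite mxE.
by apply/eqP; rewrite -sqrf_eq0 expr2 u0 // => i _; rewrite -expr2 sqr_ge0.
Qed.

Lemma sqnormDZ a b u v : sqnorm (a *: u + b *: v) =
  a ^+ 2 * sqnorm u + 2 * a * b * dotv u v + b ^+ 2 * sqnorm v.
Proof. by rewrite /sqnorm !(dotvDl, dotvDr, dotvZl, dotvZr) (dotvC v u); ring. Qed.

Lemma sqnormB u v : sqnorm (u - v) = sqnorm u - 2 * dotv u v + sqnorm v.
Proof. by rewrite /sqnorm !(dotvBl, dotvBr) (dotvC v u); ring. Qed.

(* Expanding [0 <= |a u - v|^2]. *)
Lemma sqnorm_scale_le a u v :
  0 <= a -> a * sqnorm u <= dotv v u -> a ^+ 2 * sqnorm u <= sqnorm v.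
Proof.
move=> a0 le_uv; have := sqnorm_ge0 (a *: u - v).
rewrite sqnormB /sqnorm dotvZl dotvZr dotvZl -/(sqnorm u) -/(sqnorm v) (dotvC u v).
have := ler_wpM2l a0 le_uv; nra.
Qed.

End Dot.

Lemma le0_of_le_scale (F : realFieldType) (a b : F) :
  (forall t, 0 < t -> t < 1 -> a <= t * b) -> a <= 0.
Proof.
move=> le_ab; have [b0|b0] := lerP b 0.
  have h0 : 0 < 2^-1 :> F by rewrite invr_gt0.
  have h1 : 2^-1 < 1 :> F by rewrite invf_lt1 ?ltr1n.
  have := le_ab _ h0 h1; nra.
rewrite leNgt; apply/negP => a0.
pose t := a / (2 * (a + b)).
have ht : t * (2 * (a + b)) = a by rewrite /t mulfVK //; lra.
have t0 : 0 < t by rewrite /t divr_gt0 //; lra.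
have := le_ab t t0; nra.
Qed.

Section Prox.
Variables (R : realType) (d : nat).
Variables (phi : 'rV[R]_d -> R) (g : 'rV[R]_d -> 'rV[R]_d) (m : R).
Hypothesis phi_convex : strongly_convex phi g m.

Lemma strongly_convex_segment x z t : 0 <= t <= 1 ->
  phi (z + t *: (x - z)) <=
  (1 - t) * phi z + t * phi x - m / 2 * (t * (1 - t)) * sqnorm (x - z).
Proof.
case/andP=> t0 t1; set w := z + t *: (x - z).
have hz := phi_convex z w; have hx := phi_convex x w.
have ez : z - w = (- t) *: (x - z) by rewrite /w opprD addNKr scaleNr.
have ex : x - w = (1 - t) *: (x - z).
  by rewrite /w opprD addrA scalerBl scale1r addrAC.
rewrite ez in hz; rewrite ex in hx.
rewrite /sqnorm !(dotvZl, dotvZr) -/(sqnorm _) in hz hx.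
have t1' : 0 <= 1 - t by rewrite subr_ge0.
have := ler_wpM2l t0 hx; have := ler_wpM2l t1' hz.
set s := sqnorm _; set e := dotv _ _; nra.
Qed.

(* The optimality condition of [z = prox_{gamma phi}(y)], obtained by comparing
   [z] with [z + t (x - z)] and letting [t] go to [0]. *)
Lemma prox_three_point gamma y z x : 0 < gamma -> is_prox phi gamma y z ->
  gamma * (phi z - phi x) + gamma * m / 2 * sqnorm (x - z) <= dotv (y - z) (z - x).
Proof.
move=> gamma0 zP; set k := (2 * gamma)^-1; set s := sqnorm (x - z).
set e := dotv (z - y) (x - z).
have -> : dotv (y - z) (z - x) = e by rewrite -opprB dotvNl -(opprB x) dotvNr opprK.
suff key : phi z - phi x + m / 2 * s - 2 * k * e <= 0.
  have := ler_wpM2l (ltW gamma0) key; rewrite mulr0.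
  have -> : gamma * (phi z - phi x + m / 2 * s - 2 * k * e) =
            gamma * (phi z - phi x) + gamma * m / 2 * s - e.
    by rewrite /k; field; rewrite lt0r_neq0.
  by rewrite subr_le0.
apply: (@le0_of_le_scale _ _ ((m / 2 + k) * s)) => t t0 t1.
have t01 : 0 <= t <= 1 by rewrite !ltW.
have seg := strongly_convex_segment x z t01.
have := zP (z + t *: (x - z)).
rewrite -addrA addrC -addrA (addrC _ (- y)) -(scale1r (- y + z)) addrC.
rewrite sqnormDZ scale1r (addrC (- y)) -/s -/e -/k => prox_opt.
rewrite -/s in seg; rewrite -(ler_pM2l t0); lra.
Qed.

Lemma prox_contract gamma y z xs : 0 <= m -> 0 < gamma -> is_prox phi gamma y z ->
  (1 + gamma * m) ^+ 2 * sqnorm (z - xs) <= sqnorm (y - xs - gamma *: g xs).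
Proof.
move=> m0 gamma0 zP; apply: sqnorm_scale_le.
  by rewrite addr_ge0 // mulr_ge0 // ltW.
have opt := prox_three_point xs gamma0 zP.
have := ler_wpM2l (ltW gamma0) (phi_convex z xs).
have -> : y - xs - gamma *: g xs = (y - z) + (z - xs) - gamma *: g xs.
  by rewrite addrA addrNK.
rewrite -[xs - z]opprB in opt.
rewrite /sqnorm !(dotvBl, dotvDl, dotvZl, dotvNl, dotvNr) opprK (dotvC (g xs)) in opt *.
lra.
Qed.
End Prox.

Lemma derive_eq0_at_min (R : realType) (V : normedModType R) (F : V -> R) xs u :
  (forall x, differentiable F x) -> (forall x, F xs <= F x) -> 'D_u F xs = 0.
Proof.
move=> Fd Fmin; pose G t := F (t *: u + xs).
have quotE a : (fun h : R => h^-1 *: ((G \o shift a) (h *: 1) - G a)) =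
    (fun h : R => h^-1 *: ((F \o shift (a *: u + xs)) (h *: u) - F (a *: u + xs))).
  apply: funext => h /=; rewrite /G /=.
  by congr (_ *: (F _ - _)); rewrite [h *: 1]mulr1 scalerDl addrA.
have Gd a : derivable G a 1 by rewrite /derivable quotE; exact: diff_derivable.
have <- : 'D_1 G 0 = 'D_u F xs by rewrite /derive quotE scale0r add0r.
apply: derive_val; apply: (@derive1_at_min _ _ (-1) 1) => //.
- by rewrite in_itv /= ltrN10 ltr01.
- by move=> t _; rewrite /G scale0r add0r.
Qed.

Section Gradient.
Variables (R : realType) (d : nat).

Lemma gradient_eq0_at_min (F : 'rV[R]_d -> R) G xs :
  has_gradient F G -> (forall x, F xs <= F x) -> G xs = 0.
Proof.
move=> FG Fmin; apply: sqnorm_eq0.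
have [_ dF] := FG xs; rewrite /sqnorm -dF -deriveE; last by case: (FG xs).
by apply: derive_eq0_at_min => // x; case: (FG x).
Qed.

Lemma has_gradient_sum n (f : 'I_n -> 'rV[R]_d -> R) gf :
  (forall i, has_gradient (f i) (gf i)) ->
  has_gradient (\sum_i f i) (fun x => \sum_i gf i x).
Proof.
move=> fG x; split; first by apply: differentiable_sum => i; case: (fG i x).
move=> h; rewrite -deriveE; last by apply: differentiable_sum => i; case: (fG i x).
rewrite derive_sum => [|i]; last by apply: diff_derivable; case: (fG i x).
rewrite dotv_suml; apply: eq_bigr => i _.
by have [fi_diff dfE] := fG i x; rewrite deriveE // dfE.
Qed.

End Gradient.

Section Sampling.
Variables (R : realType) (d n : nat) (pS : {set 'I_n} -> R).
Hypothesis pS_ge0 : forall C, 0 <= pS C.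
Hypothesis pS_sum1 : \sum_C pS C = 1.
Hypothesis pS_proper : forall i, 0 < incl_prob pS i.
Hypothesis pS_nonvacuous : pS finset.set0 = 0.

Definition gC (gf : 'I_n -> 'rV[R]_d -> 'rV[R]_d) (C : {set 'I_n}) (x : 'rV[R]_d) :=
  \sum_(i in C) (n%:R * incl_prob pS i)^-1 *: gf i x.

Lemma n_gt0 : (0 < n)%N.
Proof.
case: (posnP n) => // n0.
suff : \sum_C pS C = 0 by rewrite pS_sum1 => /eqP; rewrite oner_eq0.
apply: big1 => C _; suff -> : C = finset.set0 by [].
by apply/setP => i; have := ltn_ord i; rewrite {2}n0.
Qed.

Lemma weight_gt0 i : 0 < n%:R * incl_prob pS i.
Proof. by rewrite mulr_gt0 // ltr0n n_gt0. Qed.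

Lemma strongly_convex_fC f gf (mu : 'I_n -> R) C :
  (forall i, strongly_convex (f i) (gf i) (mu i)) ->
  strongly_convex (fC pS f C) (gC gf C) (muC pS mu C).
Proof.
move=> fconvex x y; rewrite /fC /gC /muC dotv_suml !mulr_suml -!big_split /=.
apply: ler_sum => i _.
have w0 : 0 <= (n%:R * incl_prob pS i)^-1 by rewrite invr_ge0 ltW ?weight_gt0.
have := ler_wpM2l w0 (fconvex i x y).
by rewrite dotvZl; set w := _^-1; lra.
Qed.

Lemma muC_gt0 (mu : 'I_n -> R) C :
  (forall i, 0 < mu i) -> C != finset.set0 -> 0 < muC pS mu C.
Proof.
move=> mu0 /set0Pn [i iC]; rewrite /muC (bigD1 i) //=.
apply: ltr_pwDl; first by rewrite divr_gt0 ?weight_gt0.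
by apply: sumr_ge0 => j _; rewrite ltW // divr_gt0 ?weight_gt0.
Qed.

Lemma mu_AS_le_muC (mu : 'I_n -> R) C : 0 < pS C -> mu_AS pS mu <= muC pS mu C.
Proof. by move=> pC; rewrite /mu_AS (bigD1 C) //= ge_min lexx. Qed.

Lemma mu_AS_gt0 (mu : 'I_n -> R) : (forall i, 0 < mu i) -> 0 < mu_AS pS mu.
Proof.
move=> mu0; apply: (big_ind (fun x => 0 < x)).
- by apply: muC_gt0 => //; apply/set0Pn; exists (Ordinal n_gt0); rewrite inE.
- by move=> x y x0 y0; rewrite lt_min x0 y0.
- move=> C pC; apply: muC_gt0 => //.
  by apply: contraTneq pC => ->; rewrite pS_nonvacuous ltxx.
Qed.

(* Unbiasedness: the weights [1 / (n p_i)] undo the sampling. *)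
Lemma sum_pS_gC gf x : \sum_C pS C *: gC gf C x = n%:R^-1 *: \sum_i gf i x.
Proof.
under eq_bigr => C _ do rewrite /gC scaler_sumr.
rewrite (exchange_big_dep xpredT) //= scaler_sumr; apply: eq_bigr => i _.
under eq_bigr => C _ do rewrite scalerA.
rewrite -scaler_suml -mulr_suml -[\sum_(C | _) _]/(incl_prob pS i).
by rewrite invfM mulrCA mulfV ?mulr1 // lt0r_neq0.
Qed.

Lemma sigma2_AS_sumE gf x : sigma2_AS pS gf x = \sum_C pS C * sqnorm (gC gf C x).
Proof.
rewrite /sigma2_AS big_mkcond; apply: eq_bigr => C _ /=.
case: ltrP => // pC; suff -> : pS C = 0 by rewrite mul0r.
by apply/le_anti; rewrite pC pS_ge0.
Qed.

Lemma expected_sqnorm_gradient_step gf x xs gamma : \sum_i gf i xs = 0 ->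
  \sum_C pS C * sqnorm (x - xs - gamma *: gC gf C xs) =
  sqnorm (x - xs) + gamma ^+ 2 * sigma2_AS pS gf xs.
Proof.
move=> grad0; rewrite sigma2_AS_sumE.
under eq_bigr => C _ do rewrite -[x - xs](scale1r) -scaleNr sqnormDZ !mulrDr.
rewrite !big_split /= -mulr_suml pS_sum1 expr1n !mul1r sqrrN.
have -> : \sum_C pS C * (2 * 1 * - gamma * dotv (x - xs) (gC gf C xs)) = 0.
  under eq_bigr => C _ do rewrite mulrCA -dotvZr.
  rewrite -mulr_sumr -dotv_sumr sum_pS_gC grad0 scaler0.
  by rewrite /dotv trmx0 mulmx0 mxE mulr0.
by rewrite addr0 mulr_sumr; congr (_ + _); apply: eq_bigr => C _; rewrite mulrCA.
Qed.

Lemma sppm_step f gf mu xs gamma (prox : {set 'I_n} -> 'rV[R]_d -> 'rV[R]_d) :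
  (forall i, 0 < mu i) -> (forall i, strongly_convex (f i) (gf i) (mu i)) ->
  \sum_i gf i xs = 0 -> 0 < gamma ->
  (forall C y, is_prox (fC pS f C) gamma y (prox C y)) ->
  forall x, \sum_C pS C * sqnorm (prox C x - xs) <=
    (1 + gamma * mu_AS pS mu)^-1 ^+ 2 *
    (sqnorm (x - xs) + gamma ^+ 2 * sigma2_AS pS gf xs).
Proof.
move=> mu0 fconvex grad0 gamma0 proxP x.
rewrite -(expected_sqnorm_gradient_step x gamma grad0) mulr_sumr; apply: ler_sum => C _.
have [pC|pC] := ltrP 0 (pS C); last first.
  have -> : pS C = 0 by apply/le_anti; rewrite pC pS_ge0.
  by rewrite !mul0r mulr0.
rewrite mulrCA ler_wpM2l ?pS_ge0 //.
have muAS0 := mu_AS_gt0 mu0; have le_muC := mu_AS_le_muC mu pC.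
have c0 : 0 < 1 + gamma * mu_AS pS mu by rewrite addr_gt0 // mulr_gt0.
rewrite -(ler_pM2l (exprn_gt0 2 c0)) mulrA -exprMn mulfV ?lt0r_neq0 // expr1n mul1r.
apply: le_trans (prox_contract (strongly_convex_fC C fconvex) _ _ gamma0 (proxP C x)).
- apply: ler_wpM2r; first exact: sqnorm_ge0.
  have le1 : 1 + gamma * mu_AS pS mu <= 1 + gamma * muC pS mu C.
    by rewrite lerD2l ler_pM2l.
  by rewrite ler_pXn2r // nnegrE ltW // (lt_le_trans c0 le1).
- exact: ltW (lt_le_trans muAS0 le_muC).
Qed.

End Sampling.

Section Unrolling.
Variables (R : realType) (d n : nat) (pS : {set 'I_n} -> R).
Variables (prox : {set 'I_n} -> 'rV[R]_d -> 'rV[R]_d) (xs : 'rV[R]_d).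

Lemma expected_sqdist0 x : expected_sqdist 0 pS prox x xs = sqnorm (x - xs).
Proof.
rewrite /expected_sqdist (eq_bigr (fun=> sqnorm (x - xs))) => [|s _].
  by rewrite sumr_const card_tuple expn0 mulr1n.
by rewrite (tuple0 s) big_nil mul1r.
Qed.

(* Condition on the first sampled set [S_0]. *)
Lemma expected_sqdist_succ k x : expected_sqdist k.+1 pS prox x xs =
  \sum_C pS C * expected_sqdist k pS prox (prox C x) xs.
Proof.
rewrite /expected_sqdist.
pose cons_tuple (p : {set 'I_n} * k.-tuple {set 'I_n}) := [tuple of p.1 :: p.2].
have cons_bij : bijective cons_tuple.
  exists (fun t => (thead t, [tuple of behead t])).
    by case=> C s; congr pair; apply: val_inj.
  by move=> t; case/tupleP: t => C s; apply: val_inj.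
rewrite (reindex cons_tuple (onW_bij _ cons_bij)) /= -(pair_big xpredT xpredT
  (fun C s => (\prod_(C0 <- cons_tuple (C, s)) pS C0) *
              sqnorm (sppm_iter prox x (cons_tuple (C, s)) - xs))) /=.
apply: eq_bigr => C _; rewrite mulr_sumr; apply: eq_bigr => s _.
by rewrite big_cons mulrA.
Qed.

Lemma expected_sqdist_le (q N : R) :
  0 <= q -> (forall C, 0 <= pS C) -> \sum_C pS C = 1 ->
  (forall x, \sum_C pS C * sqnorm (prox C x - xs) <= q * sqnorm (x - xs) + (1 - q) * N) ->
  forall k x, expected_sqdist k pS prox x xs <=
    q ^+ k * sqnorm (x - xs) + (1 - q ^+ k) * N.
Proof.
move=> q0 pS_ge0 pS_sum1 step; elim=> [|k IHk] x.
  by rewrite expected_sqdist0 expr0 mul1r subrr mul0r addr0.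
rewrite expected_sqdist_succ.
apply: (@le_trans _ _
  (\sum_C pS C * (q ^+ k * sqnorm (prox C x - xs) + (1 - q ^+ k) * N))).
  by apply: ler_sum => C _; rewrite ler_wpM2l.
under eq_bigr => C _ do rewrite mulrDr mulrCA.
rewrite big_split /= -mulr_sumr -mulr_suml pS_sum1 mul1r.
have := ler_wpM2l (exprn_ge0 k q0) (step x); rewrite exprSr; nra.
Qed.

End Unrolling.

Unset Implicit Arguments.

Theorem mainTheorem5 (R : realType) (d n : nat)
  (f : 'I_n -> 'rV[R]_d -> R) (gf : 'I_n -> 'rV[R]_d -> 'rV[R]_d)
  (mu : 'I_n -> R) (xs : 'rV[R]_d)
  (pS : {set 'I_n} -> R)
  (gamma : R) (prox : {set 'I_n} -> 'rV[R]_d -> 'rV[R]_d)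
  (x0 : 'rV[R]_d) (k : nat) :
  (forall i, has_gradient (f i) (gf i)) ->
  (forall i, 0 < mu i) ->
  (forall i, strongly_convex (f i) (gf i) (mu i)) ->
  (forall x, n%:R^-1 * \sum_i f i xs <= n%:R^-1 * \sum_i f i x) ->
  (forall C, 0 <= pS C) -> \sum_(C : {set 'I_n}) pS C = 1 ->
  (forall i, 0 < incl_prob pS i) -> pS (finset.set0 : {set 'I_n}) = 0 ->
  0 < gamma ->
  (forall C y, is_prox (fC pS f C) gamma y (prox C y)) ->
  expected_sqdist k pS prox x0 xs <=
    (1 + gamma * mu_AS pS mu)^-1 ^+ (2 * k) * sqnorm (x0 - xs)
    + gamma * sigma2_AS pS gf xs
      / (gamma * mu_AS pS mu ^+ 2 + 2 * mu_AS pS mu).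
Proof.
move=> fG mu0 fconvex xs_min pS_ge0 pS_sum1 pS_proper pS_nonvacuous gamma0 proxP.
have grad0 : \sum_i gf i xs = 0.
  have n0 : 0 < n%:R^-1 :> R by rewrite invr_gt0 ltr0n (n_gt0 pS_sum1 pS_nonvacuous).
  apply: (gradient_eq0_at_min (has_gradient_sum fG)) => x.
  by rewrite !fct_sumE -(ler_pM2l n0).
have m0 : 0 < mu_AS pS mu := mu_AS_gt0 pS_sum1 pS_proper pS_nonvacuous mu0.
have s0 : 0 <= sigma2_AS pS gf xs.
  by rewrite sigma2_AS_sumE // sumr_ge0 // => C _; rewrite mulr_ge0 ?sqnorm_ge0.
set m := mu_AS pS mu in m0 *; set s := sigma2_AS pS gf xs in s0 *.
set q := (1 + gamma * m)^-1 ^+ 2; set N := gamma * s / (gamma * m ^+ 2 + 2 * m).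
have c0 : 0 < 1 + gamma * m by rewrite addr_gt0 ?mulr_gt0.
have D0 : 0 < gamma * m ^+ 2 + 2 * m by rewrite addr_gt0 ?mulr_gt0 ?exprn_gt0.
have N0 : 0 <= N by rewrite divr_ge0 ?mulr_ge0 // ltW.
have fixpoint : q * (gamma ^+ 2 * s) = (1 - q) * N.
  by rewrite /q /N; field; rewrite !lt0r_neq0.
have q0 : 0 <= q by rewrite exprn_ge0 // invr_ge0 ltW.
have step x : \sum_C pS C * sqnorm (prox C x - xs) <= q * sqnorm (x - xs) + (1 - q) * N.
  rewrite -fixpoint -mulrDr.
  exact: (sppm_step pS_ge0 pS_sum1 pS_proper pS_nonvacuous mu0 fconvex grad0 gamma0).
have := expected_sqdist_le q0 pS_ge0 pS_sum1 step k x0.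
rewrite exprM -/q; have := mulr_ge0 (exprn_ge0 k q0) N0; lra.
Qed.
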